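(* Let $G$ be an ample Hausdorff groupoid, let $R$ be a commutative unital ring with the discrete topology, let $T \le R^\times$, and let $\sigma\colon G^{(2)} \to T$ be a continuous $2$-cocycle. There is an $R$-algebra isomorphism $\Psi\colon A_R(G; G \times_\sigma T) \to A_R(G,\sigma^{-1})$ with $\Psi(f)(\gamma) = f(\gamma,1)$ for all $f \in A_R(G; G\times_\sigma T)$ and $\gamma \in G$, where $\sigma^{-1}(\alpha,\beta) := \sigma(\alpha,\beta)^{-1}$. If $R$ has a $T$-inverse involution, then $\Psi$ is a $*$-isomorphism.
   Context: Groupoids are locally compact Hausdorff topological groupoids; $G$ is ample if it has a basis of compact open bisections; $T$ has the discrete topology. A continuous $2$-cocycle $\omega\colon G^{(2)}\to T$ is continuous with $\omega(\alpha,\beta)\omega(\alpha\beta,\gamma) = \omega(\alpha,\beta\gamma)\omega(\beta,\gamma)$ and $\omega(r(\gamma),\gamma)=1=\omega(\gamma,s(\gamma))$. $G\times_\sigma T$ is $G\times T$ with product topology, multiplication $(\alpha,z)(\beta,w) = (\alpha\beta,\sigma(\alpha,\beta)zw)$, inverse $(\alpha,z)^{-1} = (\alpha^{-1},\sigma(\alpha,\alpha^{-1})^{-1}z^{-1})$, with $q(\gamma,z)=\gamma$; $T$ acts on it by $z\cdot(\alpha,w) = (\alpha,zw)$. $A_R(G;G\times_\sigma T)$ is the set of continuous $f\colon G\times_\sigma T\to R$ with $f(z\cdot\varepsilon) = zf(\varepsilon)$ and $\overline{q(\{f\neq0\})}$ compact, with pointwise module operations, multiplication $(f*g)(\varepsilon)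 = \sum_{\gamma\in G^{s(q(\varepsilon))}} f(\varepsilon S(\gamma))g(S(\gamma)^{-1})$ where $S(\gamma) = (\gamma,1)$, and (when $R$ has a $T$-inverse involution) involution $f^*(\varepsilon) = \overline{f(\varepsilon^{-1})}$. $A_R(G,\omega)$ is the $R$-module of locally constant compactly supported $f\colon G\to R$ with multiplication $(f*_\omega g)(\gamma) = \sum_{\alpha\beta=\gamma}\omega(\alpha,\beta)f(\alpha)g(\beta)$ and involution $f^*(\gamma) = \omega(\gamma,\gamma^{-1})^{-1}\overline{f(\gamma^{-1})}$. A $T$-inverse involution on $R$ is a ring involution $r\mapsto\overline r$ with $\overline z = z^{-1}$ for $z\in T$. *)

From HB Require Import structures.
From mathcomp Require Import all_boot all_algebra.
From mathcomp Require Import boolp classical_sets functions fsbigop topology.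

Set Implicit Arguments.
Unset Strict Implicit.
Unset Printing Implicit Defensive.

Import GRing.Theory.
Local Open Scope classical_set_scope.
Local Open Scope ring_scope.

(* multiplication and inversion are total functions on G which are     *)
(* only meaningful on composable pairs (s a = r b).                    *)
Record groupoid (G : topologicalType) := Groupoid {
  gunit : set G;
  grng : G -> G;
  gsrc : G -> G;
  gmul : G -> G -> G;
  ginv : G -> G;
  gunit_rng : forall x, gunit (grng x);
  gunit_src : forall x, gunit (gsrc x);
  grng_unit : forall u, gunit u -> grng u = u;
  gsrc_unit : forall u, gunit u -> gsrc u = u;
  grng_mul : forall a b, gsrc a = grng b -> grng (gmul a b) = grng a;
  gsrc_mul : forall a b, gsrc a = grng b -> gsrc (gmul a b) = gsrc b;
  gmulA : forall a b c, gsrc a = grng b -> gsrc b = grng c ->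
            gmul (gmul a b) c = gmul a (gmul b c);
  gmul_rng : forall a, gmul (grng a) a = a;
  gmul_src : forall a, gmul a (gsrc a) = a;
  grng_inv : forall a, grng (ginv a) = gsrc a;
  gsrc_inv : forall a, gsrc (ginv a) = grng a;
  gmulV : forall a, gmul a (ginv a) = grng a;
  gmulVr : forall a, gmul (ginv a) a = gsrc a;
  gmul_cont : forall p : G * G, gsrc p.1 = grng p.2 ->
      {for p, continuous (fun q : subspace [set q : G * G | gsrc q.1 = grng q.2]
                              => gmul q.1 q.2)};
  ginv_cont : continuous ginv
}.

Section GroupoidDefs.
Variables (G : topologicalType) (Gm : groupoid G).

Definition G2 : set (G * G) := [set p | gsrc Gm p.1 = grng Gm p.2].

Definition open_bisection (B : set G) :=
  [/\ open B,
      (forall x y, B x -> B y -> grng Gm x = grng Gm y -> x = y),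
      (forall x y, B x -> B y -> gsrc Gm x = gsrc Gm y -> x = y) &
      (forall V, V `<=` B -> open V ->
          open (grng Gm @` V) /\ open (gsrc Gm @` V))].

Definition ample_hausdorff :=
  [/\ hausdorff_space G, locally_compact [set: G] &
      (forall (U : set G) x, open U -> U x ->
         exists B, [/\ open_bisection B, compact B, B x & B `<=` U])].

End GroupoidDefs.

(* A function into a discrete space is continuous on the subspace A    *)
(* iff it is locally constant on A.                                    *)
Definition disc_continuous_on (X : topologicalType) (Y : Type)
    (A : set X) (f : X -> Y) :=
  forall x, A x -> exists U : set X,
    [/\ open U, U x & forall y, A y -> U y -> f y = f x].

Record unit_subgroup (R : comPzRingType) := UnitSubgroup {
  usg :> {pred R};
  usg1 : 1 \in usg;
  usgM : forall x y, x \in usg -> y \in usg -> x * y \in usg;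
  usgV : forall x, x \in usg -> exists y : R, y \in usg /\ x * y = 1
}.

Section TwistedDefs.
Variables (R : comPzRingType) (T : unit_subgroup R).

Definition tT := {z : R | z \in T}.

Definition t1 : tT := exist _ 1 (usg1 T).
Definition tmul (a b : tT) : tT :=
  exist _ (sval a * sval b) (usgM (svalP a) (svalP b)).
Definition tinv (a : tT) : tT :=
  let y := cid (usgV (svalP a)) in exist _ (sval y) (proj1 (svalP y)).

Variables (G : topologicalType) (Gm : groupoid G).

Definition cocycle (sigma : G -> G -> tT) :=
  [/\ disc_continuous_on (G2 Gm) (fun p => sigma p.1 p.2),
      (forall a b c, gsrc Gm a = grng Gm b -> gsrc Gm b = grng Gm c ->
         sval (sigma a b) * sval (sigma (gmul Gm a b) c)
         = sval (sigma a (gmul Gm b c)) * sval (sigma b c)),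
      (forall g, sval (sigma (grng Gm g) g) = 1) &
      (forall g, sval (sigma g (gsrc Gm g)) = 1)].

Definition cocycle_inv (sigma : G -> G -> tT) : G -> G -> tT :=
  fun a b => tinv (sigma a b).

Section Twist.
Variable sigma : G -> G -> tT.

Definition tw_mul (e d : G * tT) : G * tT :=
  (gmul Gm e.1 d.1, tmul (tmul (sigma e.1 d.1) e.2) d.2).
Definition tw_inv (e : G * tT) : G * tT :=
  (ginv Gm e.1, tmul (tinv (sigma e.1 (ginv Gm e.1))) (tinv e.2)).
Definition tw_act (z : tT) (e : G * tT) : G * tT := (e.1, tmul z e.2).
Definition tw_S (g : G) : G * tT := (g, t1).

Definition twA (f : G * tT -> R) :=
  [/\ (forall z : tT, disc_continuous_on setT (fun g => f (g, z))),
      (forall (z : tT) (e : G * tT), f (tw_act z e) = sval z * f e) &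
      compact (closure [set g | exists z : tT, f (g, z) != 0])].

Definition tw_conv (f g : G * tT -> R) : G * tT -> R :=
  fun e => (\sum_(c \in [set c : G | grng Gm c = gsrc Gm e.1])
              f (tw_mul e (tw_S c)) * g (tw_inv (tw_S c)))%R.

Definition tw_star (conj : R -> R) (f : G * tT -> R) : G * tT -> R :=
  fun e => conj (f (tw_inv e)).

End Twist.

Section CocycleAlg.
Variable omega : G -> G -> tT.

Definition coA (f : G -> R) :=
  disc_continuous_on setT f /\ compact (closure [set g | f g != 0]).

Definition co_conv (f g : G -> R) : G -> R :=
  fun x => (\sum_(p \in [set p : G * G | gsrc Gm p.1 = grng Gm p.2
                                      /\ gmul Gm p.1 p.2 = x])
              sval (omega p.1 p.2) * f p.1 * g p.2)%R.

Definition co_star (conj : R -> R) (f : G -> R) : G -> R :=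
  fun x => sval (tinv (omega x (ginv Gm x))) * conj (f (ginv Gm x)).

End CocycleAlg.

Definition T_inverse_involution (conj : R -> R) :=
  [/\ (forall x y, conj (x + y) = conj x + conj y),
      (forall x y, conj (x * y) = conj x * conj y),
      conj 1 = 1,
      (forall x, conj (conj x) = x) &
      (forall z : tT, conj (sval z) = sval (tinv z))].

Definition Psi (f : G * tT -> R) : G -> R := fun g => f (g, t1).

End TwistedDefs.

(* An element f of A_R(G; G x_sigma T) is T-equivariant, so f (g, z) = z * f (g, 1):
   f is determined by Psi f, and every locally constant compactly supported h is
   Psi of (g, z) |-> z * h g.  For the product, the pairs (a, b) with a b = x are
   exactly the (x c, c^-1) with r c = s x, and the cocycle identity
   sigma(x c, c^-1) sigma(x, c) = sigma(c, c^-1) turns the coefficient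
   sigma(x, c) sigma(c, c^-1)^-1 of the twisted convolution into sigma(x c, c^-1)^-1. *)
From HB Require Import structures.
From mathcomp Require Import all_boot all_algebra.
From mathcomp Require Import boolp classical_sets functions fsbigop topology.
From mathcomp Require Import ring.

Set Implicit Arguments.
Unset Strict Implicit.
Unset Printing Implicit Defensive.

Import GRing.Theory.
Local Open Scope classical_set_scope.
Local Open Scope ring_scope.

Section UnitSubgroup.
Variables (R : comPzRingType) (T : unit_subgroup R).

Lemma sval_tmul (a b : tT T) : sval (tmul a b) = sval a * sval b.
Proof. by []. Qed.

Lemma sval_tinvP (a : tT T) : sval a * sval (tinv a) = 1.
Proof. exact: (proj2 (svalP (cid (usgV (svalP a))))). Qed.

Lemma sval_tinv_unique (a : tT T) (y : R) : sval a * y = 1 -> sval (tinv a) = y.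
Proof.
move=> ay1.
by rewrite -[sval (tinv a)]mulr1 -ay1 mulrA [_ * sval a]mulrC sval_tinvP mul1r.
Qed.

Lemma sval_tinv1 : sval (tinv (t1 T)) = 1.
Proof. by apply: sval_tinv_unique; rewrite mulr1. Qed.

End UnitSubgroup.

Section Groupoid.
Variables (G : topologicalType) (Gm : groupoid G).

Lemma ginvK (a : G) : ginv Gm (ginv Gm a) = a.
Proof.
have src_inv2 : gsrc Gm (ginv Gm (ginv Gm a)) = grng Gm (ginv Gm a).
  by rewrite gsrc_inv grng_inv.
rewrite -[LHS](gmul_src Gm) src_inv2 grng_inv -(gmulVr Gm a).
by rewrite -gmulA ?gsrc_inv // gmulVr gsrc_inv gmul_rng.
Qed.

Lemma factorizations_image (x : G) :
  [set p : G * G | gsrc Gm p.1 = grng Gm p.2 /\ gmul Gm p.1 p.2 = x]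
  = (fun c => (gmul Gm x c, ginv Gm c)) @` [set c | grng Gm c = gsrc Gm x].
Proof.
apply/seteqP; split.
- move=> [a b] /= [ab <-]; exists (ginv Gm b); first by rewrite /= grng_inv gsrc_mul.
  by rewrite gmulA ?grng_inv // gmulV -ab gmul_src ginvK.
- move=> _ [c /= cx <-] /=; split; first by rewrite gsrc_mul ?grng_inv.
  by rewrite gmulA ?grng_inv // gmulV cx gmul_src.
Qed.

Lemma set_inj_factorization (x : G) (P : set G) :
  set_inj P (fun c => (gmul Gm x c, ginv Gm c)).
Proof. by move=> c d _ _ [_ /(congr1 (ginv Gm))]; rewrite !ginvK. Qed.

End Groupoid.

Section Twisted.
Variables (R : comPzRingType) (T : unit_subgroup R).
Variables (G : topologicalType) (Gm : groupoid G).

Definition equivariant (f : G * tT T -> R) :=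
  forall (z : tT T) (e : G * tT T), f (tw_act z e) = sval z * f e.

Definition equivariant_ext (h : G -> R) : G * tT T -> R :=
  fun e => sval e.2 * h e.1.

Lemma equivariantE (f : G * tT T -> R) (g : G) (z : tT T) : equivariant f -> f (g, z) = sval z * Psi f g.
Proof.
move=> f_eqv; rewrite -f_eqv; congr f; congr pair.
by apply: val_inj; rewrite /= mulr1.
Qed.

Lemma equivariant_ext_equivariant (h : G -> R) : equivariant (equivariant_ext h).
Proof. by move=> z [g w]; rewrite /equivariant_ext /= mulrA. Qed.

Lemma Psi_equivariant_ext (h : G -> R) : Psi (equivariant_ext h) = h.
Proof. by apply/funext => g; rewrite /Psi /equivariant_ext /= mul1r. Qed.

Lemma equivariant_support (f : G * tT T -> R) : equivariant f ->
  [set g | exists z : tT T, f (g, z) != 0] = [set g | Psi f g != 0].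
Proof.
move=> f_eqv; apply/seteqP; split => g /=.
- by move=> [z]; rewrite equivariantE //; apply: contra => /eqP ->; rewrite mulr0.
- by exists (t1 T).
Qed.

Lemma equivariant_inj (f f' : G * tT T -> R) : equivariant f -> equivariant f' ->
  Psi f = Psi f' -> f = f'.
Proof.
move=> f_eqv f'_eqv PsiE; apply/funext => -[g z].
by rewrite !equivariantE // PsiE.
Qed.

Lemma Psi_coA (f : G * tT T -> R) : twA f -> coA (Psi f).
Proof.
case=> f_cont f_eqv f_cpt; split; first exact: f_cont.
by rewrite -equivariant_support.
Qed.

Lemma Psi_surj (h : G -> R) : coA h -> exists2 f : G * tT T -> R, twA f & Psi f = h.
Proof.
case=> h_cont h_cpt; exists (equivariant_ext h); last exact: Psi_equivariant_ext.
split.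
- move=> z x _; have [U [oU Ux hU]] := h_cont x I.
  by exists U; split => // y _ Uy; rewrite /equivariant_ext /= hU.
- exact: equivariant_ext_equivariant.
- by rewrite equivariant_support ?Psi_equivariant_ext //; apply: equivariant_ext_equivariant.
Qed.

Variable sigma : G -> G -> tT T.
Hypothesis sigma_cocycle : forall a b c, gsrc Gm a = grng Gm b -> gsrc Gm b = grng Gm c ->
  sval (sigma a b) * sval (sigma (gmul Gm a b) c)
  = sval (sigma a (gmul Gm b c)) * sval (sigma b c).
Hypothesis sigma_src1 : forall g, sval (sigma g (gsrc Gm g)) = 1.

Lemma cocycle_inv_mul_inv (x c : G) : grng Gm c = gsrc Gm x ->
  sval (tinv (sigma (gmul Gm x c) (ginv Gm c)))
  = sval (sigma x c) * sval (tinv (sigma c (ginv Gm c))).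
Proof.
move=> cx; apply: sval_tinv_unique.
rewrite mulrA [_ * sval (sigma x c)]mulrC sigma_cocycle ?grng_inv //.
by rewrite gmulV cx sigma_src1 mul1r sval_tinvP.
Qed.

Lemma Psi_conv (f f' : G * tT T -> R) : equivariant f -> equivariant f' ->
  Psi (tw_conv Gm sigma f f') = co_conv Gm (cocycle_inv sigma) (Psi f) (Psi f').
Proof.
move=> f_eqv f'_eqv; apply/funext => x.
rewrite /co_conv factorizations_image fsbig_image; last exact: set_inj_factorization.
apply: eq_fsbigr => c /[!inE] cx.
rewrite /cocycle_inv cocycle_inv_mul_inv //.
rewrite /tw_mul /tw_inv /tw_S !equivariantE // !sval_tmul sval_tinv1 /=; ring.
Qed.

Lemma Psi_star (conj : R -> R) (f : G * tT T -> R) : T_inverse_involution T conj -> equivariant f ->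
  Psi (tw_star Gm sigma conj f) = co_star Gm (cocycle_inv sigma) conj (Psi f).
Proof.
case=> _ conjM _ _ conjT f_eqv; apply/funext => x.
by rewrite /Psi /tw_star /tw_inv equivariantE // sval_tmul sval_tinv1 mulr1 conjM conjT.
Qed.

End Twisted.

Theorem corollary4p25 (G : topologicalType) (Gm : groupoid G)
    (R : comPzRingType) (T : unit_subgroup R) (sigma : G -> G -> tT T) :
  ample_hausdorff Gm -> cocycle Gm sigma ->
  let A1 := @twA R T G in
  let A2 := @coA R G in
  let Psi := @Psi R T G in
  (* Psi maps A_R(G; G x_sigma T) into A_R(G, sigma^{-1}) *)
  (forall f, A1 f -> A2 (Psi f)) /\
  (* bijectively *)
  (forall f g, A1 f -> A1 g -> Psi f = Psi g -> f = g) /\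
  (forall h, A2 h -> exists2 f, A1 f & Psi f = h) /\
  (* R-linearly *)
  (forall f g, A1 f -> A1 g ->
     Psi (fun e => f e + g e) = (fun x => Psi f x + Psi g x)) /\
  (forall (c : R) f, A1 f -> Psi (fun e => c * f e) = (fun x => c * Psi f x)) /\
  (* multiplicatively *)
  (forall f g, A1 f -> A1 g ->
     Psi (tw_conv Gm sigma f g)
     = co_conv Gm (cocycle_inv sigma) (Psi f) (Psi g)) /\
  (* and it is a *-isomorphism for any T-inverse involution on R *)
  (forall conj : R -> R, T_inverse_involution T conj ->
     forall f, A1 f ->
       Psi (tw_star Gm sigma conj f) = co_star Gm (cocycle_inv sigma) conj (Psi f)).
Proof.
move=> _ [_ sigma_cocycle _ sigma_src1] A1 A2 Psi0.
have twA_equivariant f : A1 f -> equivariant f by case.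
split; first exact: Psi_coA.
split; first by move=> f g /twA_equivariant + /twA_equivariant; exact: equivariant_inj.
split; first exact: Psi_surj.
do 2 split => //.
split; first by move=> f g /twA_equivariant + /twA_equivariant; exact: Psi_conv.
by move=> conj conjT f /twA_equivariant; exact: Psi_star.
Qed.
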